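(* For every $n\in\mathbb N$ and every choice of digits $c_j\in\{0,\dots,m_j\}$, $j=1,\dots,n$, the increment of $F$ on the cylinder $\Delta^{-\tilde Q}_{c_1c_2\dots c_n}$ equals $$\mu_F\big(\Delta^{-\tilde Q}_{c_1c_2\dots c_n}\big)=\prod_{j=1}^{n}\tilde p_{c_j,j}.$$
   Context: Let $(m_n)_{n\ge1}$ be finite nonnegative integers and $\tilde Q=\|q_{i,n}\|$ ($i\in\{0,\dots,m_n\}$) with $q_{i,n}>0$, $\sum_{i}q_{i,n}=1$ for all $n$, and $\prod_n q_{i_n,n}=0$ for every digit sequence $(i_n)$. Put $a_{0,n}=0$, $a_{i,n}=\sum_{l<i}q_{l,n}$; $\Delta^{\tilde Q}_{j_1j_2\dots}=a_{j_1,1}+\sum_{n\ge2}a_{j_n,n}\prod_{l<n}q_{j_l,l}$. For odd $n$: $\tilde q_{i,n}=q_{i,n}$; for even $n$: $\tilde q_{i,n}=q_{m_n-i,n}$. The nega-$\tilde Q$-representation $x=\Delta^{-\tilde Q}_{i_1i_2\dots}$ means $x=\Delta^{\tilde Q}_{i_1[m_2-i_2]i_3[m_4-i_4]\dots}$; every $x\in[0,1]$ has one. The cylinder $\Delta^{-\tilde Q}_{c_1\dots c_n}$ is the set of $x\in[0,1]$ having a nega-$\tilde Q$-representation whose first $n$ digits are $c_1,\dots,c_n$; it is the segment with endpoints $A=\Delta^{-\tilde Q}_{c_1\dots c_nm_{n+1}0m_{n+3}0m_{n+5}\dots}$ and $B=\Delta^{-\tilde Q}_{c_1\dots c_n0m_{n+2}0m_{n+4}\dots}$,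 where $A$ is the left and $B$ the right endpoint if $n$ is odd, and vice versa if $n$ is even. The increment $\mu_F$ of $F$ on the cylinder is $F(\text{right endpoint})-F(\text{left endpoint})$. Let $P=\|p_{i,n}\|$ have the same shape with $p_{i,n}\in(-1,1)$, $\sum_ip_{i,n}=1$, $\prod_n|p_{i_n,n}|=0$ for every digit sequence, $0<\sum_{i<c}p_{i,n}<1$ for $c\in\{1,\dots,m_n\}$. Put $\beta_{0,n}=0$, $\beta_{c,n}=\sum_{i<c}p_{i,n}$; for odd $n$: $\tilde p_{i,n}=p_{i,n}$, $\tilde\beta_{i,n}=\beta_{i,n}$; for even $n$: $\tilde p_{i,n}=p_{m_n-i,n}$, $\tilde\beta_{i,n}=\beta_{m_n-i,n}$. $F(x)=\beta_{i_1,1}+\sum_{k\ge2}\tilde\beta_{i_k,k}\prod_{j<k}\tilde p_{i_j,j}$ for $x=\Delta^{-\tilde Q}_{i_1i_2\dots}$ (independent of the choice of representation). *)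

From Stdlib Require Import Reals Lra Lia Arith.
From Coquelicot Require Import Coquelicot.
Open Scope R_scope.

(* Conventions: positions are indexed from 1 as in the paper (index 0 of
   every sequence is unused).  Matrices are  q : nat -> nat -> R  with
   q i n = q_{i,n}. *)

Fixpoint psum (g : nat -> R) (c : nat) : R :=
  match c with
  | O => 0
  | S c' => psum g c' + g c'
  end.

Fixpoint pprod (f : nat -> R) (N : nat) : R :=
  match N with
  | O => 1
  | S N' => pprod f N' * f (S N')
  end.

Definition admissible (m : nat -> nat) (i : nat -> nat) : Prop :=
  forall n, (1 <= n)%nat -> (i n <= m n)%nat.

Definition Qmatrix (m : nat -> nat) (q : nat -> nat -> R) : Prop :=
  (forall n i, (1 <= n)%nat -> (i <= m n)%nat -> 0 < q i n) /\
  (forall n, (1 <= n)%nat -> psum (fun i => q i n) (S (m n)) = 1) /\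
  (forall i : nat -> nat, admissible m i ->
      is_lim_seq (fun N => pprod (fun n => q (i n) n) N) 0).

Definition Pmatrix (m : nat -> nat) (p : nat -> nat -> R) : Prop :=
  (forall n i, (1 <= n)%nat -> (i <= m n)%nat -> -1 < p i n < 1) /\
  (forall n, (1 <= n)%nat -> psum (fun i => p i n) (S (m n)) = 1) /\
  (forall i : nat -> nat, admissible m i ->
      is_lim_seq (fun N => pprod (fun n => Rabs (p (i n) n)) N) 0) /\
  (forall n c, (1 <= n)%nat -> (1 <= c)%nat -> (c <= m n)%nat ->
      0 < psum (fun i => p i n) c < 1).

Definition acoef (q : nat -> nat -> R) (i n : nat) : R := psum (fun l => q l n) i.

Definition DeltaQ (q : nat -> nat -> R) (j : nat -> nat) : R :=
  Series (fun k => match k with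
                   | O => 0
                   | S k' => acoef q (j k) k * pprod (fun l => q (j l) l) k'
                   end).

Definition negadig (m : nat -> nat) (i : nat -> nat) (k : nat) : nat :=
  if Nat.odd k then i k else (m k - i k)%nat.

(* Delta^{-Q~}_{i1 i2 ...} = Delta^{Q~}_{i1 [m2-i2] i3 [m4-i4] ...} *)
Definition DeltaNQ (m : nat -> nat) (q : nat -> nat -> R) (i : nat -> nat) : R :=
  DeltaQ q (negadig m i).

Definition beta (p : nat -> nat -> R) (c n : nat) : R := psum (fun i => p i n) c.

Definition ptilde (m : nat -> nat) (p : nat -> nat -> R) (i n : nat) : R :=
  if Nat.odd n then p i n else p (m n - i)%nat n.

Definition btilde (m : nat -> nat) (p : nat -> nat -> R) (i n : nat) : R :=
  if Nat.odd n then beta p i n else beta p (m n - i)%nat n.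

(* F(x) for x = Delta^{-Q~}_{i1 i2 ...}, computed from the representation
   (i_k):  beta_{i1,1} + sum_{k>=2} btilde_{ik,k} prod_{j<k} ptilde_{ij,j}.
   (btilde_{i,1} = beta_{i,1} since 1 is odd.) *)
Definition Frep (m : nat -> nat) (p : nat -> nat -> R) (i : nat -> nat) : R :=
  Series (fun k => match k with
                   | O => 0
                   | S k' => btilde m p (i k) k * pprod (fun l => ptilde m p (i l) l) k'
                   end).

(* Endpoint representations of the cylinder Delta^{-Q~}_{c1...cn}:
   A = c1..cn m_{n+1} 0 m_{n+3} 0 ...,  B = c1..cn 0 m_{n+2} 0 m_{n+4} ... *)
Definition endA (m : nat -> nat) (n : nat) (c : nat -> nat) (k : nat) : nat :=
  if (k <=? n)%nat then c k else if Nat.odd (k - n) then m k else 0%nat.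

Definition endB (m : nat -> nat) (n : nat) (c : nat -> nat) (k : nat) : nat :=
  if (k <=? n)%nat then c k else if Nat.odd (k - n) then 0%nat else m k.

Definition rightEnd m n c := if Nat.odd n then endB m n c else endA m n c.
Definition leftEnd  m n c := if Nat.odd n then endA m n c else endB m n c.

Definition muF (m : nat -> nat) (p : nat -> nat -> R) (n : nat) (c : nat -> nat) : R :=
  Frep m p (rightEnd m n c) - Frep m p (leftEnd m n c).

(* Through the digit map [negadig] the representation (i_k) is read as an
   ordinary Q~-representation, and the k-th term of F becomes
   beta_{j_k,k} * prod_{l<k} p_{j_l,l} with j = negadig m i.  The two endpoints
   of the cylinder share their first n digits, hence the first n terms of F.
   Beyond position n the left endpoint has effective digits 0, so its tail
   vanishes, while the right endpoint has effective digits m_k, and since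
   beta_{m_k,k} = 1 - p_{m_k,k} its tail telescopes to
   prod_{l<=n} p~_{c_l,l} - lim_N prod_{l<=N} = prod_{l<=n} p~_{c_l,l}. *)

From Stdlib Require Import Reals Lra Lia Arith.
From Coquelicot Require Import Coquelicot.
Open Scope R_scope.

Lemma pprod_ext (f g : nat -> R) (N : nat) :
  (forall l, (1 <= l <= N)%nat -> f l = g l) -> pprod f N = pprod g N.
Proof.
  induction N as [|N IH]; intro Hfg; simpl; [reflexivity|].
  rewrite IH by (intros; apply Hfg; lia). rewrite Hfg by lia. reflexivity.
Qed.

Lemma Rabs_pprod (f : nat -> R) (N : nat) :
  Rabs (pprod f N) = pprod (fun l => Rabs (f l)) N.
Proof.
  induction N as [|N IH]; simpl; [apply Rabs_R1|].
  rewrite Rabs_mult, IH. reflexivity.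
Qed.

Lemma is_series_telescoping (a P : nat -> R) (n : nat) :
  (forall k, (n <= k)%nat -> a (S k) = P k - P (S k)) ->
  is_lim_seq P 0 -> is_series a (sum_n a n + P n).
Proof.
  intros Htel HP.
  assert (Hpartial : forall N, (n <= N)%nat -> @eq R (sum_n a N) (sum_n a n + P n - P N)).
  { intros N HN. induction HN as [|N HN IH]; [lra|].
    rewrite sum_Sn, IH, Htel by exact HN. change plus with Rplus. ring. }
  change (is_lim_seq (sum_n a) (sum_n a n + P n)).
  apply is_lim_seq_ext_loc with (u := fun N => sum_n a n + P n - P N).
  - exists n. intros N HN. symmetry. exact (Hpartial N HN).
  - pose proof (is_lim_seq_minus' _ _ _ _ (is_lim_seq_const (sum_n a n + P n)) HP)
      as Hlim.
    rewrite Rminus_0_r in Hlim. exact Hlim.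
Qed.

Lemma ptilde_negadig m p (i : nat -> nat) k :
  ptilde m p (i k) k = p (negadig m i k) k.
Proof. unfold ptilde, negadig. destruct (Nat.odd k); reflexivity. Qed.

Lemma btilde_negadig m p (i : nat -> nat) k :
  btilde m p (i k) k = beta p (negadig m i k) k.
Proof. unfold btilde, negadig. destruct (Nat.odd k); reflexivity. Qed.

Lemma beta_last m p n : Pmatrix m p -> (1 <= n)%nat ->
  beta p (m n) n = 1 - p (m n) n.
Proof.
  intros [_ [Hrow _]] Hn. specialize (Hrow n Hn). simpl in Hrow.
  unfold beta. lra.
Qed.

Lemma is_lim_seq_pprod_ptilde m p (i : nat -> nat) :
  Pmatrix m p -> admissible m (negadig m i) ->
  is_lim_seq (pprod (fun l => ptilde m p (i l) l)) 0.
Proof.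
  intros [_ [_ [Hlim _]]] Hadm. apply is_lim_seq_abs_0.
  apply is_lim_seq_ext with (u := pprod (fun l => Rabs (p (negadig m i l) l))).
  - intro N. rewrite Rabs_pprod. apply pprod_ext. intros l _.
    rewrite ptilde_negadig. reflexivity.
  - exact (Hlim _ Hadm).
Qed.

Section Endpoints.

Variables (m : nat -> nat) (n : nat) (c : nat -> nat).

Lemma rightEnd_head k : (k <= n)%nat -> rightEnd m n c k = c k.
Proof.
  intro Hk. unfold rightEnd, endA, endB.
  destruct (Nat.odd n); cbv beta; rewrite (proj2 (Nat.leb_le k n) Hk); reflexivity.
Qed.

Lemma leftEnd_head k : (k <= n)%nat -> leftEnd m n c k = c k.
Proof.
  intro Hk. unfold leftEnd, endA, endB.
  destruct (Nat.odd n); cbv beta; rewrite (proj2 (Nat.leb_le k n) Hk); reflexivity.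
Qed.

Lemma negadig_rightEnd_tail k : (n < k)%nat -> negadig m (rightEnd m n c) k = m k.
Proof.
  intro Hk. unfold negadig, rightEnd, endA, endB.
  destruct (Nat.odd n) eqn:Hodd; cbv beta;
    rewrite (proj2 (Nat.leb_gt k n) Hk), (Nat.odd_sub k n), Hodd by lia;
    destruct (Nat.odd k); simpl; lia.
Qed.

Lemma negadig_leftEnd_tail k : (n < k)%nat -> negadig m (leftEnd m n c) k = 0%nat.
Proof.
  intro Hk. unfold negadig, leftEnd, endA, endB.
  destruct (Nat.odd n) eqn:Hodd; cbv beta;
    rewrite (proj2 (Nat.leb_gt k n) Hk), (Nat.odd_sub k n), Hodd by lia;
    destruct (Nat.odd k); simpl; lia.
Qed.

Lemma admissible_negadig_rightEnd :
  (forall j, (1 <= j)%nat -> (j <= n)%nat -> (c j <= m j)%nat) ->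
  admissible m (negadig m (rightEnd m n c)).
Proof.
  intros Hc k Hk. destruct (le_lt_dec k n) as [Hkn|Hkn].
  - unfold negadig. rewrite rightEnd_head by exact Hkn.
    specialize (Hc k Hk Hkn). destruct (Nat.odd k); lia.
  - rewrite negadig_rightEnd_tail by exact Hkn. lia.
Qed.

End Endpoints.

Definition Fterm (m : nat -> nat) (p : nat -> nat -> R) (i : nat -> nat) (k : nat) : R :=
  match k with
  | O => 0
  | S k' => btilde m p (i k) k * pprod (fun l => ptilde m p (i l) l) k'
  end.

Lemma Frep_Fterm m p i : Frep m p i = Series (Fterm m p i).
Proof. reflexivity. Qed.

Lemma Fterm_ext m p (i j : nat -> nat) k :
  (forall l, (1 <= l <= k)%nat -> i l = j l) -> Fterm m p i k = Fterm m p j k.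
Proof.
  intro Hij. destruct k as [|k]; [reflexivity|]. simpl.
  rewrite Hij by lia. f_equal.
  apply pprod_ext. intros l Hl. rewrite Hij by lia. reflexivity.
Qed.

Section Increment.

Variables (m : nat -> nat) (p : nat -> nat -> R) (n : nat) (c : nat -> nat).
Hypothesis HP : Pmatrix m p.

(* The odd right-hand side is the shape of [is_series_telescoping] with P = 0. *)
Lemma Fterm_leftEnd_tail k : (n <= k)%nat ->
  Fterm m p (leftEnd m n c) (S k) = 0 - 0.
Proof.
  intro Hk. simpl. rewrite btilde_negadig, negadig_leftEnd_tail by lia.
  unfold beta. simpl. ring.
Qed.

Lemma Fterm_rightEnd_tail k : (n <= k)%nat ->
  Fterm m p (rightEnd m n c) (S k) =
  pprod (fun l => ptilde m p (rightEnd m n c l) l) k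
  - pprod (fun l => ptilde m p (rightEnd m n c l) l) (S k).
Proof.
  intro Hk. simpl.
  rewrite btilde_negadig, ptilde_negadig, negadig_rightEnd_tail, beta_last
    by (auto || lia).
  ring.
Qed.

End Increment.

Theorem mainTheorem4 (m : nat -> nat) (q p : nat -> nat -> R)
  (HQ : Qmatrix m q) (HP : Pmatrix m p)
  (n : nat) (c : nat -> nat) (Hn : (1 <= n)%nat)
  (Hc : forall j, (1 <= j)%nat -> (j <= n)%nat -> (c j <= m j)%nat) :
  muF m p n c = pprod (fun j => ptilde m p (c j) j) n.
Proof.
  set (P := pprod (fun l => ptilde m p (rightEnd m n c l) l)).
  assert (Hleft := is_series_telescoping _ (fun _ => 0) n
                     (Fterm_leftEnd_tail m p n c) (is_lim_seq_const 0)).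
  assert (Hright := is_series_telescoping _ P n (Fterm_rightEnd_tail m p n c HP)
                      (is_lim_seq_pprod_ptilde m p _ HP
                         (admissible_negadig_rightEnd m n c Hc))).
  assert (Hhead : sum_n (Fterm m p (rightEnd m n c)) n
                  = sum_n (Fterm m p (leftEnd m n c)) n).
  { apply sum_n_ext_loc. intros k Hk. apply Fterm_ext. intros l Hl.
    rewrite rightEnd_head, leftEnd_head by lia. reflexivity. }
  unfold muF. rewrite !Frep_Fterm.
  rewrite (is_series_unique _ _ Hright), (is_series_unique _ _ Hleft), Hhead.
  replace (P n) with (pprod (fun j => ptilde m p (c j) j) n); [ring|].
  apply pprod_ext. intros l Hl. unfold P. rewrite rightEnd_head by lia. reflexivity.
Qed.
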